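(* Let $a_0,a_1,\dots,a_k\ge 0$, $\delta>1$ and $m>0$ be real numbers, and let $r=m^{-1/(\delta-1)}$. If $s=\sum_{i=0}^k a_i\ge 1$ and $a_i\le rs$ for all $1\le i\le k$, then $$m\big(a_0+c a_1^\delta+\dots+c a_k^\delta\big)\le c s^\delta$$ for every $c\ge m$. *)

From mathcomp Require Import all_boot all_order all_algebra.
From mathcomp Require Import all_classical all_reals all_analysis.

From mathcomp Require Import all_boot all_order all_algebra.
From mathcomp Require Import all_classical all_reals all_analysis.
From mathcomp Require Import ring.
Import Order.TTheory GRing.Theory Num.Theory.
Local Open Scope ring_scope.

(* Write c s^delta = sum_i c a_i s^(delta-1) and compare termwise: for i = 0
   use m <= c and s^(delta-1) >= 1; for i >= 1, raising a_i <= r s to the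
   power delta - 1 gives m a_i^(delta-1) <= s^(delta-1), since
   r^(delta-1) = 1/m. *)

Lemma powR_Ninv_powR (R : realType) (m e : R) : 0 <= m -> e != 0 ->
  (m `^ (- e^-1)) `^ e = m^-1.
Proof. by move=> m0 e0; rewrite -powRrM mulNr mulVf // powR_inv1. Qed.

Lemma mul_powR_le_of_le_root (R : realType) (m e x s : R) :
  0 < m -> 0 < e -> 0 <= x -> 0 <= s ->
  x <= m `^ (- e^-1) * s -> m * x `^ e <= s `^ e.
Proof.
move=> m0 e0 x0 s0 xle.
have r0 : 0 <= m `^ (- e^-1) by apply: powR_ge0.
have : x `^ e <= (m `^ (- e^-1) * s) `^ e.
  by apply: ge0_ler_powR; rewrite ?nnegrE ?mulr_ge0 // ltW.
rewrite powRM // powR_Ninv_powR ?(ltW m0) ?gt_eqF // => le_xr.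
rewrite -(ler_pM2l (_ : 0 < m^-1)) ?invr_gt0 //.
by rewrite mulrA mulVf ?gt_eqF // mul1r.
Qed.

Section TermwiseBounds.
Context {R : realType} {delta m s c : R}.
Hypotheses (hdelta : 1 < delta) (hm : 0 < m) (hs : 1 <= s) (hc : m <= c).

Let c0 : 0 < c. Proof. exact: lt_le_trans hc. Qed.

Lemma head_term_le (x : R) : 0 <= x -> m * x <= c * x * s `^ (delta - 1).
Proof.
move=> x0; have se1 : 1 <= s `^ (delta - 1).
  by rewrite -{1}(powRr0 s) (ler_powR hs) // subr_ge0 ltW.
apply: (le_trans (ler_wpM2r x0 hc)).
by rewrite -{1}[c * x]mulr1 ler_wpM2l // mulr_ge0 // ltW.
Qed.

Lemma tail_term_le (x : R) : 0 <= x ->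
  x <= m `^ (- (delta - 1)^-1) * s ->
  m * (c * x `^ delta) <= c * x * s `^ (delta - 1).
Proof.
move=> x0 xle; have d0 : 0 < delta by apply: lt_trans hdelta.
have le_pow : m * x `^ (delta - 1) <= s `^ (delta - 1).
  by apply: mul_powR_le_of_le_root; rewrite ?subr_gt0 // (le_trans ler01).
rewrite -(mulr_powRB1 x0 d0).
have -> : m * (c * (x * x `^ (delta - 1))) = c * x * (m * x `^ (delta - 1)).
  by ring.
by rewrite ler_wpM2l // mulr_ge0 // ltW.
Qed.

End TermwiseBounds.

Theorem lemma2p6 (R : realType) (k : nat) (a : nat -> R) (delta m : R)
  (ha : forall i, (i <= k)%N -> 0 <= a i)
  (hdelta : 1 < delta) (hm : 0 < m)
  (hs : 1 <= \sum_(0 <= i < k.+1) a i)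
  (hr : forall i, (1 <= i <= k)%N ->
     a i <= m `^ (- (delta - 1)^-1) * \sum_(0 <= i < k.+1) a i) :
  forall c : R, m <= c ->
    m * (a 0%N + \sum_(1 <= i < k.+1) c * a i `^ delta)
      <= c * (\sum_(0 <= i < k.+1) a i) `^ delta.
Proof.
move=> c hc; set s := \sum_(0 <= i < k.+1) a i in hs hr *.
have s0 : 0 <= s by apply: le_trans hs.
have d0 : 0 < delta by apply: lt_trans hdelta.
have -> : c * s `^ delta = \sum_(0 <= i < k.+1) c * a i * s `^ (delta - 1).
  rewrite -(mulr_powRB1 s0 d0) {1}/s big_distrl big_distrr.
  by apply: eq_bigr => i _; exact: mulrA.
rewrite mulrDr big_distrr [leRHS]big_ltn // lerD //.
  exact: head_term_le hdelta hm hs hc _ (ha 0 (leq0n k)).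
apply: ler_sum_nat => i /andP[i1 ik].
have hi : (1 <= i <= k)%N by rewrite i1.
exact: tail_term_le hdelta hm hs hc _ (ha _ ik) (hr _ hi).
Qed.
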